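(* For all $t,s_1,s_2\in\Lambda^\infty$: if $t\to^\infty_N s_1$ and $t\to^\infty_N s_2$, then $s_1\equiv s_2$.
   Context: Fix an infinite set $V$ of variables and a set $C$ of constants with $V\cap C=\emptyset$, containing a distinguished constant $\bot$. $\Lambda^\infty$ is the set of infinitary lambda-terms: all finite and infinite terms generated coinductively by $t ::= c\mid x\mid t\,t\mid\lambda x.t$, identified up to $\alpha$-equivalence; $s[t/x]$ is capture-avoiding substitution; $\equiv$ is identity; an atom is a variable or constant. $\to_\beta$ is the compatible closure of $\{((\lambda x.s)t,s[t/x])\}$, $\to^*_\beta$ its reflexive-transitive closure. A term is in head normal form (hnf) if it is $\lambda x_1\ldots x_m.\,a\,t_1\ldots t_n$ ($m,n\ge0$, $a$ an atom, $a\not\equiv\bot$); $t$ has a hnf if $t\to^*_\beta t'$ for some $t'$ in hnf. Weak head contraction $\to_w$ is the least relation with $(\lambda x.s)t\to_w s[t/x]$ and $s\to_w s'\Rightarrow st\to_w s't$; head contraction $\to_h$ is the least relation with $s\to_w s'\Rightarrow s\to_h s'$ and $s\to_h s'\Rightarrow\lambda x.s\to_h\lambda x.s'$; $\to^*_h$ is its reflexive-transitive closure. The relation $\to^\infty_N$ is the greatest relation such that whenever $t\to^\infty_N u$, either (i) $u\equiv\bot$ and $t$ has no hnf, or (ii) $u\equiv\lambda x_1\ldots x_n.\,a\,t_1'\ldots t_m'$ with $a$ an atom, $a\not\equiv\bot$, and there are $t_1,\ldots,t_m$ with $t\to^*_h\lambda x_1\ldots x_n.\,a\,t_1\ldots t_m$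 and $t_i\to^\infty_N t_i'$ for $i=1,\ldots,m$. *)

From Stdlib Require Import List Relations.
Set Implicit Arguments.

Section Terms.
Variable C : Type.
Variable bot : C.

(* Lambda^infty: finite and infinite terms, coinductively; variables are
   de Bruijn indices (so alpha-equivalent terms are syntactically equal). *)
CoInductive term : Type :=
| Var : nat -> term
| Cst : C -> term
| App : term -> term -> term
| Lam : term -> term.

(* Identity (≡) of infinitary terms: bisimilarity. *)
CoInductive bisim : term -> term -> Prop :=
| bisim_var : forall n, bisim (Var n) (Var n)
| bisim_cst : forall c, bisim (Cst c) (Cst c)
| bisim_app : forall a b a' b', bisim a a' -> bisim b b' -> bisim (App a b) (App a' b')
| bisim_lam : forall s s', bisim s s' -> bisim (Lam s) (Lam s').

Definition upren (r : nat -> nat) (n : nat) : nat :=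
  match n with 0 => 0 | S k => S (r k) end.

CoFixpoint ren (r : nat -> nat) (t : term) : term :=
  match t with
  | Var n => Var (r n)
  | Cst c => Cst c
  | App a b => App (ren r a) (ren r b)
  | Lam s => Lam (ren (upren r) s)
  end.

Definition up (sg : nat -> term) (n : nat) : term :=
  match n with 0 => Var 0 | S k => ren S (sg k) end.

CoFixpoint subst (sg : nat -> term) (t : term) : term :=
  match t with
  | Var n => sg n
  | Cst c => Cst c
  | App a b => App (subst sg a) (subst sg b)
  | Lam s => Lam (subst (up sg) s)
  end.

(* s[u/x] where x is the variable bound by the enclosing lambda (index 0) *)
Definition subst0 (u s : term) : term :=
  subst (fun n => match n with 0 => u | S k => Var k end) s.

Inductive bstep : term -> term -> Prop :=
| b_root : forall s u, bstep (App (Lam s) u) (subst0 u s)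
| b_appl : forall a a' b, bstep a a' -> bstep (App a b) (App a' b)
| b_appr : forall a b b', bstep b b' -> bstep (App a b) (App a b')
| b_lam  : forall s s', bstep s s' -> bstep (Lam s) (Lam s').

Definition bstar := clos_refl_trans term bstep.

Inductive wstep : term -> term -> Prop :=
| w_root : forall s u, wstep (App (Lam s) u) (subst0 u s)
| w_appl : forall a a' b, wstep a a' -> wstep (App a b) (App a' b).

Inductive hstep : term -> term -> Prop :=
| h_w : forall s s', wstep s s' -> hstep s s'
| h_lam : forall s s', hstep s s' -> hstep (Lam s) (Lam s').

Definition hstar := clos_refl_trans term hstep.

Inductive atom : Type := AVar : nat -> atom | ACst : C -> atom.

Definition atom_tm (a : atom) : term :=
  match a with AVar n => Var n | ACst c => Cst c end.

Fixpoint lams (n : nat) (t : term) : term :=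
  match n with 0 => t | S k => Lam (lams k t) end.

Definition apps (h : term) (ts : list term) : term := fold_left App ts h.

Definition is_hnf (t : term) : Prop :=
  exists n a ts, a <> ACst bot /\ t = lams n (apps (atom_tm a) ts).

Definition has_hnf (t : term) : Prop := exists t', bstar t t' /\ is_hnf t'.

CoInductive NR : term -> term -> Prop :=
| NR_bot : forall t, ~ has_hnf t -> NR t (Cst bot)
| NR_hnf : forall t n a ts ts',
    a <> ACst bot ->
    hstar t (lams n (apps (atom_tm a) ts)) ->
    length ts = length ts' ->
    (forall i d, i < length ts -> NR (nth i ts d) (nth i ts' d)) ->
    NR t (lams n (apps (atom_tm a) ts')).

End Terms.

(* Head reduction is deterministic and stops at head normal forms, so the two
   derivations of t ->N s1 and t ->N s2 either both declare t meaningless or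
   both reach the same hnf λx1..xn. a t1..tm; in the latter case s1 and s2
   share the spine λx1..xn. a and their arguments are again ->N reducts of the
   common ti.  Such "same spine, coreduct arguments" pairs form a
   bisimulation. *)
From Stdlib Require Import List Relations Lia.
Import ListNotations.
Set Implicit Arguments.

Lemma Forall2_of_nth (A B : Type) (P : A -> B -> Prop) (l1 : list A) (l2 : list B) :
  length l1 = length l2 ->
  (forall i a b, i < length l1 -> P (nth i l1 a) (nth i l2 b)) ->
  Forall2 P l1 l2.
Proof.
  revert l2; induction l1 as [|x l1 IH]; intros [|y l2] Hlen HP; try discriminate;
    constructor.
  - apply (HP 0 x y); simpl; lia.
  - apply IH; [now injection Hlen|].
    intros i a b Hi; apply (HP (S i) a b); simpl; lia.
Qed.

Lemma rt_deterministic_normal_unique (A : Type) (step : relation A) (x u v : A) :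
  (forall y z z', step y z -> step y z' -> z = z') ->
  clos_refl_trans A step x u -> clos_refl_trans A step x v ->
  (forall w, ~ step u w) -> (forall w, ~ step v w) -> u = v.
Proof.
  intros Hdet Hu Hv; apply clos_rt_rt1n in Hu; apply clos_rt_rt1n in Hv.
  revert v Hv; induction Hu as [x0|x0 y u Hxy Hyu IH]; intros v Hv Nu Nv.
  - destruct Hv as [|y' w Hxy' _]; [reflexivity|now destruct (Nu _ Hxy')].
  - destruct Hv as [|y' w Hxy' Hy'w]; [now destruct (Nv _ Hxy)|].
    rewrite (Hdet _ _ _ Hxy Hxy') in IH; auto.
Qed.

Section HeadReduction.
Variable C : Type.

Lemma wstep_bstep (s s' : term C) : wstep s s' -> bstep s s'.
Proof. induction 1; constructor; assumption. Qed.

Lemma hstep_bstep (s s' : term C) : hstep s s' -> bstep s s'.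
Proof. induction 1; [apply wstep_bstep | constructor]; assumption. Qed.

Lemma hstar_bstar (s s' : term C) : hstar s s' -> bstar s s'.
Proof.
  induction 1; [apply rt_step, hstep_bstep | apply rt_refl | eapply rt_trans]; eauto.
Qed.

Lemma wstep_deterministic (s u v : term C) : wstep s u -> wstep s v -> u = v.
Proof.
  intros Hu; revert v; induction Hu; intros v Hv; inversion Hv; subst.
  - reflexivity.
  - match goal with H : wstep (Lam _) _ |- _ => inversion H end.
  - match goal with H : wstep (Lam _) _ |- _ => inversion H end.
  - f_equal; auto.
Qed.

Lemma hstep_deterministic (s u v : term C) : hstep s u -> hstep s v -> u = v.
Proof.
  intros Hu; revert v; induction Hu; intros v Hv; inversion Hv; subst.
  - eapply wstep_deterministic; eauto.
  - match goal with H : wstep (Lam _) _ |- _ => inversion H end.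
  - match goal with H : wstep (Lam _) _ |- _ => inversion H end.
  - f_equal; auto.
Qed.

Lemma apps_wnormal_not_lam (ts : list (term C)) (h : term C) :
  (forall h', ~ wstep h h') -> (forall s, h <> Lam s) ->
  (forall h', ~ wstep (apps h ts) h') /\ (forall s, apps h ts <> Lam s).
Proof.
  revert h; induction ts as [|x ts IH]; intros h Nh Lh; [split; assumption|].
  apply IH; [|discriminate].
  intros h' Hw; inversion Hw; subst; [eapply Lh | eapply Nh]; eauto.
Qed.

Lemma apps_atom_wnormal_not_lam (a : atom C) (ts : list (term C)) :
  (forall h', ~ wstep (apps (atom_tm a) ts) h') /\
  (forall s, apps (atom_tm a) ts <> Lam s).
Proof. apply apps_wnormal_not_lam; destruct a; intros ? H; inversion H. Qed.

Lemma hnf_hnormal (n : nat) (a : atom C) (ts : list (term C)) (u : term C) :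
  ~ hstep (lams n (apps (atom_tm a) ts)) u.
Proof.
  destruct (apps_atom_wnormal_not_lam a ts) as [Nw Nl].
  revert u; induction n as [|n IH]; simpl; intros u H.
  - inversion H as [? ? Hw | s ? ? E]; [eapply Nw | eapply Nl]; eauto.
  - inversion H as [? ? Hw | ? ? Hs]; [inversion Hw | eapply IH; eauto].
Qed.

Lemma hstar_hnf_unique {t : term C} {n1 n2} {a1 a2 : atom C} {ts1 ts2} :
  hstar t (lams n1 (apps (atom_tm a1) ts1)) ->
  hstar t (lams n2 (apps (atom_tm a2) ts2)) ->
  lams n1 (apps (atom_tm a1) ts1) = lams n2 (apps (atom_tm a2) ts2).
Proof.
  intros H1 H2; eapply rt_deterministic_normal_unique;
    [exact hstep_deterministic | exact H1 | exact H2 | apply hnf_hnormal ..].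
Qed.

Lemma apps_snoc (h : term C) (ts : list (term C)) (x : term C) :
  apps h (ts ++ [x]) = App (apps h ts) x.
Proof. unfold apps; rewrite fold_left_app; reflexivity. Qed.

Lemma apps_atom_inj {a1 a2 : atom C} {ts1 ts2 : list (term C)} :
  apps (atom_tm a1) ts1 = apps (atom_tm a2) ts2 -> a1 = a2 /\ ts1 = ts2.
Proof.
  revert a1 a2 ts2; induction ts1 as [|x ts1 IH] using rev_ind;
    intros a1 a2 ts2 E; destruct ts2 as [|y ts2 _] using rev_ind;
    rewrite ?apps_snoc in E.
  - destruct a1, a2; inversion E; auto.
  - destruct a1; discriminate.
  - destruct a2; discriminate.
  - injection E as E ->; destruct (IH _ _ _ E) as [-> ->]; auto.
Qed.

Lemma lams_apps_atom_inj {n1 n2} {a1 a2 : atom C} {ts1 ts2} :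
  lams n1 (apps (atom_tm a1) ts1) = lams n2 (apps (atom_tm a2) ts2) ->
  n1 = n2 /\ a1 = a2 /\ ts1 = ts2.
Proof.
  revert n2; induction n1 as [|n1 IH]; intros [|n2] E; simpl in E.
  - now destruct (apps_atom_inj E).
  - now destruct (proj2 (apps_atom_wnormal_not_lam a1 ts1) _ E).
  - now destruct (proj2 (apps_atom_wnormal_not_lam a2 ts2) _ (eq_sym E)).
  - injection E as E; destruct (IH _ E) as [-> [-> ->]]; auto.
Qed.

End HeadReduction.

Section SpineBisimulation.
Variable C : Type.
Variable Rel : term C -> term C -> Prop.

Definition spine (x y : term C) : Prop :=
  exists n a ts1 ts2, x = lams n (apps (atom_tm a) ts1) /\
    y = lams n (apps (atom_tm a) ts2) /\ Forall2 Rel ts1 ts2.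

Hypothesis Rel_spine : forall x y, Rel x y -> spine x y.

(* One constructor layer of [bisim] over [spine]; [spine_unfold] needs [rev_ind],
   behind which [cofix] cannot be seen to be guarded. *)
Inductive spine_layer : term C -> term C -> Prop :=
| layer_var : forall n : nat, spine_layer (@Var C n) (@Var C n)
| layer_cst : forall c : C, spine_layer (@Cst C c) (@Cst C c)
| layer_app : forall a b a' b', spine a a' -> spine b b' ->
    spine_layer (App a b) (App a' b')
| layer_lam : forall s s', spine s s' -> spine_layer (Lam s) (Lam s').

Lemma spine_unfold (x y : term C) : spine x y -> spine_layer x y.
Proof.
  intros (n & a & ts1 & ts2 & -> & -> & Hts).
  destruct n as [|n]; simpl; [|constructor; exists n, a, ts1, ts2; auto].
  destruct ts1 as [|x1 ts1 _] using rev_ind.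
  - inversion Hts; subst; destruct a; constructor.
  - apply Forall2_app_inv_l in Hts as (ys & lst & Hts & Hlst & ->).
    inversion Hlst as [|? y1 ? ? Hx1 Hnil]; inversion Hnil; subst.
    rewrite !apps_snoc; constructor; [exists 0, a, ts1, ys|]; auto.
Qed.

Lemma spine_bisim : forall x y, spine x y -> bisim x y.
Proof.
  cofix CIH; intros x y H.
  destruct (spine_unfold H); constructor; apply CIH; assumption.
Qed.

End SpineBisimulation.

Section NormalReduction.
Variable C : Type.
Variable bot : C.

Definition NR_coreduct (x y : term C) : Prop :=
  exists t, NR bot t x /\ NR bot t y.

Lemma hstar_hnf_has_hnf {t : term C} {n a ts} :
  a <> ACst bot -> hstar t (lams n (apps (atom_tm a) ts)) -> has_hnf bot t.
Proof.
  intros Ha Ht; exists (lams n (apps (atom_tm a) ts)); split.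
  - exact (hstar_bstar Ht).
  - exists n, a, ts; auto.
Qed.

Lemma NR_coreduct_spine (x y : term C) : NR_coreduct x y -> spine NR_coreduct x y.
Proof.
  intros (t & Hx & Hy).
  destruct Hx as [t Nx | t n a ts xs Ha Ht Hlx Hxs];
  destruct Hy as [t' Ny | t' n' a' us ys Ha' Ht' Hly Hys].
  - exists 0, (ACst bot), [], []; auto.
  - now destruct Nx; apply (hstar_hnf_has_hnf Ha' Ht').
  - now destruct Ny; apply (hstar_hnf_has_hnf Ha Ht).
  - destruct (lams_apps_atom_inj (hstar_hnf_unique Ht Ht')) as [-> [-> ->]].
    exists n', a', xs, ys; repeat split.
    apply Forall2_of_nth; [congruence|].
    intros i d1 d2 Hi.
    exists (nth i us d1); split.
    + apply Hxs; lia.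
    + rewrite (nth_indep ys d2 d1) by lia; apply Hys; lia.
Qed.

End NormalReduction.

Theorem lemma5p38 (C : Type) (bot : C) (t s1 s2 : term C) :
  NR bot t s1 -> NR bot t s2 -> bisim s1 s2.
Proof.
  intros H1 H2.
  apply (spine_bisim (@NR_coreduct_spine C bot)), NR_coreduct_spine.
  exists t; split; assumption.
Qed.
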